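(* For any connected graph $G$ of order $n \ge 2$ and for any positive integer $k$, $1\le \dim_{k,f}(G)\le \frac{n}{2}$.
   Context: All graphs are finite, simple, undirected and connected. $d(x,y)$ is the length of a shortest $x$–$y$ path in $G$. For a positive integer $k$, $d_k(x,y)=\min\{d(x,y),k+1\}$ and $R_k\{x,y\}=\{z\in V(G): d_k(x,z)\neq d_k(y,z)\}$. For a function $g$ on $V(G)$ and $U\subseteq V(G)$, $g(U)=\sum_{s\in U}g(s)$. A function $h:V(G)\to[0,1]$ is a $k$-truncated resolving function of $G$ if $h(R_k\{x,y\})\ge 1$ for all distinct $x,y\in V(G)$. The fractional $k$-truncated metric dimension is $\dim_{k,f}(G)=\min\{h(V(G)): h \text{ is a } k\text{-truncated resolving function of } G\}$. *)

From HB Require Import structures.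
From mathcomp Require Import all_boot all_order all_algebra.
From mathcomp Require Import boolp classical_sets reals.
Set Implicit Arguments. Unset Strict Implicit. Unset Printing Implicit Defensive.
Import Order.TTheory GRing.Theory Num.Theory.

Definition simple_graph (T : finType) (e : rel T) : Prop :=
  symmetric e /\ irreflexive e.

Definition connected_graph (T : finType) (e : rel T) : Prop :=
  forall x y : T, connect e x y.

Fixpoint walk_le (T : finType) (e : rel T) (n : nat) (x y : T) : bool :=
  match n with
  | 0 => x == y
  | n'.+1 => walk_le e n' x y || [exists z, e x z && walk_le e n' z y]
  end.

(* graph distance d(x,y): least n with a walk of length <= n
   (for a connected graph this is < #|T|, so the search range suffices) *)
Definition dist (T : finType) (e : rel T) (x y : T) : nat :=
  find (fun n => walk_le e n x y) (iota 0 #|T|).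

Definition distk (T : finType) (e : rel T) (k : nat) (x y : T) : nat :=
  minn (dist e x y) k.+1.

Definition Rk (T : finType) (e : rel T) (k : nat) (x y : T) : {set T} :=
  [set z | distk e k x z != distk e k y z].

Local Open Scope ring_scope.

Definition k_truncated_resolving_function (R : realType) (T : finType)
    (e : rel T) (k : nat) (h : T -> R) : Prop :=
  (forall v, 0 <= h v <= 1) /\
  (forall x y : T, x != y -> 1 <= \sum_(z in Rk e k x y) h z).

Local Open Scope classical_set_scope.

(* dim_{k,f}(G): the minimum (taken here as the infimum, which is attained)
   of h(V(G)) over k-truncated resolving functions h *)
Definition frac_k_trunc_dim (R : realType) (T : finType) (e : rel T) (k : nat) : R :=
  inf [set (\sum_(v : T) h v)%R | h in [set h : T -> R |
         k_truncated_resolving_function e k h]].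

(* Two distinct vertices x, y always lie in R_k{x,y}, since d_k(x,x) = 0 while
   d_k(y,x) > 0.  Hence the constant function 1/2 is a k-truncated resolving
   function, giving the upper bound n/2, and any resolving function has total
   weight at least h(R_k{x,y}) >= 1 for some pair x != y. *)
From mathcomp Require Import all_boot all_order all_algebra.
From mathcomp Require Import boolp classical_sets reals.
Import Order.TTheory GRing.Theory Num.Theory.
Local Open Scope ring_scope.

Section TruncatedResolvingSets.

Variables (T : finType) (e : rel T) (k : nat).

Lemma dist_self (x : T) : dist e x x = 0%N.
Proof. by rewrite /dist; case: #|T| => [|m] //=; rewrite eqxx. Qed.

Lemma dist_gt0 (x y : T) : x != y -> (0 < dist e x y)%N.
Proof.
move=> nxy; have : (0 < #|T|)%N by apply/card_gt0P; exists x.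
by rewrite /dist; case: #|T| => [|m] //= _; rewrite (negbTE nxy).
Qed.

Lemma Rk_sym (x y : T) : Rk e k x y = Rk e k y x.
Proof. by apply/setP => z; rewrite !inE eq_sym. Qed.

Lemma mem_Rk_l (x y : T) : x != y -> x \in Rk e k x y.
Proof.
move=> nxy; rewrite inE /distk dist_self min0n eq_sym -lt0n.
by rewrite leq_min dist_gt0 // eq_sym.
Qed.

Lemma mem_Rk_r (x y : T) : x != y -> y \in Rk e k x y.
Proof. by move=> nxy; rewrite Rk_sym mem_Rk_l // eq_sym. Qed.

Variable R : realType.

Lemma resolving_sum_ge1 (h : T -> R) : (1 < #|T|)%N ->
  k_truncated_resolving_function e k h -> 1 <= \sum_v h v.
Proof.
case/card_gt1P => x [y [_ _ nxy]] [h01 hres].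
apply: le_trans (hres x y nxy) _.
rewrite [leRHS](bigID (mem (Rk e k x y))) /= lerDl.
by apply: sumr_ge0 => v _; case/andP: (h01 v).
Qed.

Lemma half_resolving : k_truncated_resolving_function e k (fun _ => 2^-1 : R).
Proof.
split=> [v | x y nxy].
  by rewrite invr_ge0 ler0n invf_le1 ?ler1n.
rewrite (bigD1 x) ?mem_Rk_l //= (bigD1 y) /=; last first.
  by rewrite mem_Rk_r // eq_sym nxy.
rewrite addrA [leLHS](splitr 1) mul1r lerDl.
by apply: sumr_ge0 => v _; rewrite invr_ge0.
Qed.

End TruncatedResolvingSets.

Theorem proposition2p6 (R : realType) (T : finType) (e : rel T) (k : nat) :
  simple_graph e -> connected_graph e -> (2 <= #|T|)%N -> (0 < k)%N ->
  1 <= frac_k_trunc_dim R e k <= (#|T|%:R / 2 : R).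
Proof.
move=> _ _ hT _.
set S := [set (\sum_(v : T) h v)%R | h in [set h : T -> R |
         k_truncated_resolving_function e k h]]%classic.
have S_ge1 s : S s -> 1 <= s by move=> [h hres <-]; apply: resolving_sum_ge1 hres.
have S_half : S (\sum_(v : T) 2^-1) by exists (fun _ => 2^-1) => //; exact: half_resolving.
apply/andP; split; first exact: lb_le_inf (ex_intro _ _ S_half) S_ge1.
apply: le_trans (ge_inf (ex_intro _ 1 S_ge1) S_half) _.
by rewrite sumr_const mulr_natl.
Qed.
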